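(* Let $f:T\to T'$ be a homomorphism of pre-trusses. If $P$ is a completely prime paragon in the pre-truss $\operatorname{im}f$, then $f^{-1}(P)$ is a completely prime paragon in $T$.
   Context: A heap is a set with a ternary operation $[-,-,-]$ satisfying $[a_1,a_2,[a_3,a_4,a_5]]=[[a_1,a_2,a_3],a_4,a_5]$ and $[a,a,b]=b=[b,a,a]$. A pre-truss is a heap with an associative multiplication; homomorphisms preserve both operations, and images are pre-trusses. A normal sub-heap is a non-empty subset $S$ closed under $[-,-,-]$ with $[[a,e,s],a,e]\in S$ for all $a$ and $e,s\in S$; $a\sim_S b$ iff $[a,b,s]\in S$ for some (equivalently all) $s\in S$. A sub-heap $S$ is closed if $[ts',ts,s]\in S$ and $[s't,st,s]\in S$ for all $s,s'\in S$, $t$. A paragon is a non-empty normal sub-heap $P$ all of whose $\sim_P$-classes are closed. An ideal is a normal sub-heap $I$ with $ti,it\in I$ for all $t$, $i\in I$. For $p\in P$, $a$ in the pre-truss, $P_p^a=\{[q,p,a]\mid q\in P\}$. A non-empty paragon $P$ of a pre-truss $X$ is completely prime if for all $p\in P$ and $a,b,c\in X$: $[ab,ac,p]\in P$ implies that $P_p^a$ is an ideal or $[b,c,p]\in P$; and $[ba,ca,p]\in P$ implies that $P_p^a$ is an ideal or $[b,c,p]\in P$. *)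

From Stdlib Require Import ProofIrrelevance.

Set Implicit Arguments.

Record preTruss := PreTruss {
  car :> Type;
  tern : car -> car -> car -> car;
  mul : car -> car -> car;
  tern_assoc : forall a1 a2 a3 a4 a5,
      tern a1 a2 (tern a3 a4 a5) = tern (tern a1 a2 a3) a4 a5;
  tern_idl : forall a b, tern a a b = b;
  tern_idr : forall a b, tern b a a = b;
  mul_assoc : forall a b c, mul a (mul b c) = mul (mul a b) c
}.

Arguments tern {p}.
Arguments mul {p}.

Definition is_hom (T T' : preTruss) (f : T -> T') : Prop :=
  (forall a b c, f (tern a b c) = tern (f a) (f b) (f c)) /\
  (forall a b, f (mul a b) = mul (f a) (f b)).

Section Image.
Variables (T T' : preTruss) (f : T -> T') (hf : @is_hom T T' f).

Definition im_car := { y : T' | exists x, f x = y }.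

Definition im_tern (u v w : im_car) : im_car.
Proof.
  refine (exist _ (tern (proj1_sig u) (proj1_sig v) (proj1_sig w)) _).
  destruct u as [y1 [x1 h1]], v as [y2 [x2 h2]], w as [y3 [x3 h3]]; simpl.
  exists (tern x1 x2 x3). rewrite (proj1 hf). subst. reflexivity.
Defined.

Definition im_mul (u v : im_car) : im_car.
Proof.
  refine (exist _ (mul (proj1_sig u) (proj1_sig v)) _).
  destruct u as [y1 [x1 h1]], v as [y2 [x2 h2]]; simpl.
  exists (mul x1 x2). rewrite (proj2 hf). subst. reflexivity.
Defined.

Lemma im_eq (u v : im_car) : proj1_sig u = proj1_sig v -> u = v.
Proof.
  destruct u as [y hy], v as [z hz]; simpl; intros e; subst.
  f_equal; apply proof_irrelevance.
Qed.

Lemma im_tern_assoc : forall a1 a2 a3 a4 a5,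
  im_tern a1 a2 (im_tern a3 a4 a5) = im_tern (im_tern a1 a2 a3) a4 a5.
Proof. intros; apply im_eq; simpl; apply tern_assoc. Qed.

Lemma im_tern_idl : forall a b, im_tern a a b = b.
Proof. intros; apply im_eq; simpl; apply tern_idl. Qed.

Lemma im_tern_idr : forall a b, im_tern b a a = b.
Proof. intros; apply im_eq; simpl; apply tern_idr. Qed.

Lemma im_mul_assoc : forall a b c, im_mul a (im_mul b c) = im_mul (im_mul a b) c.
Proof. intros; apply im_eq; simpl; apply mul_assoc. Qed.

Definition im_truss : preTruss :=
  @PreTruss im_car im_tern im_mul im_tern_assoc im_tern_idl im_tern_idr im_mul_assoc.

Definition to_im (x : T) : im_truss := exist _ (f x) (ex_intro _ x eq_refl).

End Image.

Section Notions.
Variable X : preTruss.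

Definition subheap (S : X -> Prop) : Prop :=
  forall a b c, S a -> S b -> S c -> S (tern a b c).

Definition normal_subheap (S : X -> Prop) : Prop :=
  (exists s, S s) /\ subheap S /\
  (forall a e s, S e -> S s -> S (tern (tern a e s) a e)).

Definition simS (S : X -> Prop) (a b : X) : Prop :=
  exists s, S s /\ S (tern a b s).

Definition closed_subheap (S : X -> Prop) : Prop :=
  subheap S /\
  forall s s' t, S s -> S s' ->
    S (tern (mul t s') (mul t s) s) /\ S (tern (mul s' t) (mul s t) s).

Definition paragon (P : X -> Prop) : Prop :=
  normal_subheap P /\ forall a, closed_subheap (simS P a).

Definition ideal (I : X -> Prop) : Prop :=
  normal_subheap I /\ forall t i, I i -> I (mul t i) /\ I (mul i t).

Definition Ppa (P : X -> Prop) (p a : X) : X -> Prop :=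
  fun x => exists q, P q /\ x = tern q p a.

Definition completely_prime (P : X -> Prop) : Prop :=
  (exists p, P p) /\ paragon P /\
  forall p a b c, P p ->
    (P (tern (mul a b) (mul a c) p) -> ideal (Ppa P p a) \/ P (tern b c p)) /\
    (P (tern (mul b a) (mul c a) p) -> ideal (Ppa P p a) \/ P (tern b c p)).

End Notions.

Arguments subheap {X}. Arguments normal_subheap {X}. Arguments simS {X}.
Arguments closed_subheap {X}. Arguments paragon {X}. Arguments ideal {X}.
Arguments Ppa {X}. Arguments completely_prime {X}.

(* Every defining condition of a completely prime paragon is a closure property
   of the predicate written with the heap bracket and the multiplication, so it
   pulls back along a homomorphism g.  The existential parts (non-emptiness and
   the witness in [a ~_P b]) need g to be surjective, which is the case for the
   corestriction of f onto its image. *)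
From Stdlib Require Import Setoid.

Set Implicit Arguments.
Unset Strict Implicit.

Section Extensionality.
Variables (X : preTruss) (S S' : X -> Prop).
Hypothesis SS' : forall x, S x <-> S' x.

Lemma subheap_ext : subheap S -> subheap S'.
Proof. intros H a b c. rewrite <- !SS'. apply H. Qed.

Lemma normal_subheap_ext : normal_subheap S -> normal_subheap S'.
Proof.
  intros [[s Hs] [Hsub Hnorm]]. split; [|split].
  - exists s. apply SS'. exact Hs.
  - exact (subheap_ext Hsub).
  - intros a e s0. rewrite <- !SS'. apply Hnorm.
Qed.

Lemma closed_subheap_ext : closed_subheap S -> closed_subheap S'.
Proof.
  intros [Hsub Hcl]. split.
  - exact (subheap_ext Hsub).
  - intros s s' t. rewrite <- !SS'. apply Hcl.
Qed.

Lemma ideal_ext : ideal S -> ideal S'.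
Proof.
  intros [Hnorm Hid]. split.
  - exact (normal_subheap_ext Hnorm).
  - intros t i. rewrite <- !SS'. apply Hid.
Qed.

End Extensionality.

Lemma in_Ppa (X : preTruss) (S : X -> Prop) p a x : Ppa S p a x <-> S (tern x a p).
Proof.
  split.
  - intros [q [Hq ->]]. rewrite <- tern_assoc, tern_idl, tern_idr. exact Hq.
  - intros Hx. exists (tern x a p). split; [exact Hx|].
    rewrite <- tern_assoc, tern_idl, tern_idr. reflexivity.
Qed.

Section Preimage.
Variables (X Y : preTruss) (g : X -> Y).
Hypothesis g_hom : is_hom X Y g.
Hypothesis g_surj : forall y, exists x, g x = y.

Let g_tern := proj1 g_hom.
Let g_mul := proj2 g_hom.

Lemma subheap_preimage (S : Y -> Prop) : subheap S -> subheap (fun x => S (g x)).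
Proof. intros H a b c Ha Hb Hc. rewrite g_tern. apply H; assumption. Qed.

Lemma normal_subheap_preimage (S : Y -> Prop) :
  normal_subheap S -> normal_subheap (fun x => S (g x)).
Proof.
  intros [[s Hs] [Hsub Hnorm]]. split; [|split].
  - destruct (g_surj s) as [x <-]. exists x. exact Hs.
  - exact (subheap_preimage Hsub).
  - intros a e s0 He Hs0. rewrite !g_tern. apply Hnorm; assumption.
Qed.

Lemma closed_subheap_preimage (S : Y -> Prop) :
  closed_subheap S -> closed_subheap (fun x => S (g x)).
Proof.
  intros [Hsub Hcl]. split.
  - exact (subheap_preimage Hsub).
  - intros s s' t Hs Hs'. rewrite !g_tern, !g_mul. apply Hcl; assumption.
Qed.

Lemma ideal_preimage (S : Y -> Prop) : ideal S -> ideal (fun x => S (g x)).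
Proof.
  intros [Hnorm Hid]. split.
  - exact (normal_subheap_preimage Hnorm).
  - intros t i Hi. rewrite !g_mul. apply Hid; assumption.
Qed.

Lemma simS_preimage (S : Y -> Prop) a x :
  simS (fun x => S (g x)) a x <-> simS S (g a) (g x).
Proof.
  split.
  - intros [s [Hs Has]]. exists (g s). rewrite <- g_tern. split; assumption.
  - intros [s [Hs Has]]. destruct (g_surj s) as [s0 <-].
    exists s0. rewrite g_tern. split; assumption.
Qed.

Lemma Ppa_preimage (S : Y -> Prop) p a x :
  Ppa (fun x => S (g x)) p a x <-> Ppa S (g p) (g a) (g x).
Proof. rewrite !in_Ppa, g_tern. reflexivity. Qed.

Lemma paragon_preimage (P : Y -> Prop) : paragon P -> paragon (fun x => P (g x)).
Proof.
  intros [Hnorm Hcl]. split.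
  - exact (normal_subheap_preimage Hnorm).
  - intros a. apply (closed_subheap_ext (fun x => iff_sym (simS_preimage P a x))).
    exact (closed_subheap_preimage (Hcl (g a))).
Qed.

Lemma ideal_Ppa_preimage (P : Y -> Prop) p a :
  ideal (Ppa P (g p) (g a)) -> ideal (Ppa (fun x => P (g x)) p a).
Proof.
  intros Hid. apply (ideal_ext (fun x => iff_sym (Ppa_preimage P p a x))).
  exact (ideal_preimage Hid).
Qed.

Lemma completely_prime_preimage (P : Y -> Prop) :
  completely_prime P -> completely_prime (fun x => P (g x)).
Proof.
  intros [[p Hp] [Hpar Hprime]]. split; [|split].
  - destruct (g_surj p) as [x <-]. exists x. exact Hp.
  - exact (paragon_preimage Hpar).
  - intros p0 a b c Hp0.
    destruct (Hprime (g p0) (g a) (g b) (g c) Hp0) as [Hleft Hright].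
    split; intros Habc; rewrite !g_tern, !g_mul in Habc;
      [destruct (Hleft Habc) as [Hid | Hbc] | destruct (Hright Habc) as [Hid | Hbc]];
      solve [left; exact (ideal_Ppa_preimage Hid) | right; rewrite g_tern; exact Hbc].
Qed.

End Preimage.

Lemma to_im_hom (T T' : preTruss) (f : T -> T') (hf : is_hom T T' f) :
  is_hom T (im_truss hf) (to_im hf).
Proof.
  split; intros; apply im_eq; simpl; [apply (proj1 hf) | apply (proj2 hf)].
Qed.

Lemma to_im_surjective (T T' : preTruss) (f : T -> T') (hf : is_hom T T' f) :
  forall y : im_truss hf, exists x, to_im hf x = y.
Proof. intros [y [x Hx]]. exists x. apply im_eq. exact Hx. Qed.

Theorem lemma4p13 (T T' : preTruss) (f : T -> T') (hf : @is_hom T T' f)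
  (P : im_truss hf -> Prop) :
  completely_prime P ->
  completely_prime (fun x : T => P (to_im hf x)).
Proof.
  apply completely_prime_preimage.
  - apply to_im_hom.
  - apply to_im_surjective.
Qed.
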